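(* Let $L\subseteq\Sigma^*$ be a regular language and let $M=(M(L),\le_L)$ be its syntactic ordered monoid. Then $N^1(M)=\Theta(N^1(L))$ as functions of $n$.
   Context: Non-deterministic communication complexity: for $f:X\times Y\to\{0,1\}$ (Alice holds $x\in X$, Bob holds $y\in Y$), $N^1(f)$ is the minimum cost of a non-deterministic protocol for $f$; equivalently, up to an additive constant 2, $N^1(f)=\log_2 C^1(f)$, where $C^1(f)$ is the minimum number of rectangles $S\times T\subseteq X\times Y$ on which $f\equiv 1$ whose union is $f^{-1}(1)$. A finite ordered monoid $(M,\le)$ is a finite monoid with a partial order such that $x\le y$ implies $zx\le zy$ and $xz\le yz$ for all $z\in M$. An order ideal is a subset $I\subseteq M$ such that $y\in I$ and $x\le y$ imply $x\in I$. For a finite ordered monoid $M$ and an order ideal $I$, $N^1(M,I)(n)$ is $N^1$ of the function in which Alice receives $m_1,m_3,\dots,m_{2n-1}\in M$, Bob receives $m_2,m_4,\dots,m_{2n}\in M$, and the value is $1$ iff $m_1m_2\cdots m_{2n}\in I$; $N^1(M)(n)=\max_I N^1(M,I)(n)$ over all order ideals $I$ of $M$. For a language $L\subseteq\Sigma^*$, $N^1(L)(n)$ is $N^1$ of the function in which Alice receives $a_1,a_3,\dots,a_{2n-1}$, Bob receives $a_2,a_4,\dots,a_{2n}$, each $a_i\in\Sigma\cup\{\epsilon\}$ ($\epsilon$ the empty word), and the value is $1$ iff $a_1a_2\cdots a_{2n}\in L$. Asymptotic notation refers to $n\to\infty$. Syntactic ordered monoid: for $L\subseteq\Sigma^*$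 write $x\preceq_L y$ if for all $u,v\in\Sigma^*$, $uyv\in L\Rightarrow uxv\in L$, and $x\equiv_L y$ if $x\preceq_L y$ and $y\preceq_L x$. The syntactic monoid is $M(L)=\Sigma^*/\equiv_L$, and it is ordered by $[x]\le_L[y]$ iff $x\preceq_L y$; $(M(L),\le_L)$ is the syntactic ordered monoid. *)

From mathcomp Require Import all_boot.
Set Implicit Arguments. Unset Strict Implicit. Unset Printing Implicit Defensive.

Section CC.
Variables (X Y : finType) (f : X -> Y -> bool).

Definition rect := ({set X} * {set Y})%type.

Definition one_cover (R : {set rect}) : bool :=
  [forall r in R, forall x in r.1, forall y in r.2, f x y] &&
  [forall x, forall y, f x y ==> [exists r in R, (x \in r.1) && (y \in r.2)]].

(* The set of all 1-rectangles, which is always a 1-cover. *)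
Definition all_one_rects : {set rect} :=
  [set r : rect | [forall x in r.1, forall y in r.2, f x y]].

Definition C1 : nat :=
  \big[minn/#|all_one_rects|]_(R : {set rect} | one_cover R) #|R|.

(* N^1(f): cost of the canonical non-deterministic protocol
   (guess a rectangle: ceil(log2 C^1) bits, then 2 verification bits). *)
Definition N1 : nat := up_log 2 C1 + 2.
End CC.

Record fin_ord_monoid := FinOrdMonoid {
  mcar :> finType;
  mmul : mcar -> mcar -> mcar;
  mone : mcar;
  mle : rel mcar;
  mmulA : forall x y z, mmul x (mmul y z) = mmul (mmul x y) z;
  mmul1 : forall x, mmul mone x = x;
  mmulr1 : forall x, mmul x mone = x;
  mle_refl : forall x, mle x x;
  mle_trans : forall x y z, mle x y -> mle y z -> mle x z;
  mle_anti : forall x y, mle x y -> mle y x -> x = y;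
  mle_mull : forall x y z, mle x y -> mle (mmul z x) (mmul z y);
  mle_mulr : forall x y z, mle x y -> mle (mmul x z) (mmul y z)
}.

Definition mprod (M : fin_ord_monoid) (s : seq M) : M := foldr (@mmul M) (@mone M) s.

Definition order_ideal (M : fin_ord_monoid) (I : {set M}) : bool :=
  [forall x : M, forall y : M, (y \in I) && mle x y ==> (x \in I)].

Definition interleave (T : Type) (n : nat) (a b : n.-tuple T) : seq T :=
  flatten [seq [:: p.1; p.2] | p <- zip a b].

Definition N1MI (M : fin_ord_monoid) (I : {set M}) (n : nat) : nat :=
  N1 (fun (a b : n.-tuple M) => mprod (interleave a b) \in I).

Definition N1M (M : fin_ord_monoid) (n : nat) : nat :=
  \max_(I : {set M} | order_ideal I) N1MI I n.

(* N^1(L)(n): letters in Sigma + {eps}, eps encoded as None *)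
Definition N1L (S : finType) (L : pred (seq S)) (n : nat) : nat :=
  N1 (fun (a b : n.-tuple (option S)) => L (pmap id (interleave a b))).

Record dfa (S : finType) := Dfa {
  dstate : finType;
  dstart : dstate;
  dfinal : pred dstate;
  dtrans : dstate -> S -> dstate
}.

Definition dfa_accept (S : finType) (A : dfa S) (w : seq S) : bool :=
  @dfinal S A (foldl (@dtrans S A) (@dstart S A) w).

Definition regular (S : finType) (L : pred (seq S)) : Prop :=
  exists A : dfa S, forall w, L w = dfa_accept A w.

Definition synt_le (S : finType) (L : pred (seq S)) (x y : seq S) : Prop :=
  forall u v, L (u ++ y ++ v) -> L (u ++ x ++ v).

(* eta : Sigma^* -> M is a surjective monoid morphism whose induced order is
   exactly <=_L; i.e. (M, mle) is (an isomorphic copy of) Sigma^*/==_L with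
   the order [x] <= [y] iff x <=_L y: the syntactic ordered monoid of L. *)
Definition syntactic_ordered_monoid (S : finType) (L : pred (seq S))
    (M : fin_ord_monoid) (eta : seq S -> M) : Prop :=
  [/\ eta [::] = mone M,
      forall x y, eta (x ++ y) = mmul (eta x) (eta y),
      forall m : M, exists w, eta w = m
    & forall x y, mle (eta x) (eta y) <-> synt_le L x y].

Definition BigTheta (f g : nat -> nat) : Prop :=
  exists c, 0 < c /\ exists N0, forall n, N0 <= n ->
    f n <= c * g n /\ g n <= c * f n.

(* Let eta : Sigma^* -> M be the syntactic ordered morphism of L and
   [accepting] = eta(L), an order ideal of M with L = eta^-1(accepting).
   - Lower bound: the language problem is the [accepting]-problem of M read
     through eta letter by letter, so N^1(L) <= N^1(M).
   - Upper bound: fix for every m in M a representative word padded to a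
     common length K.  An order-ideal problem of M on n letters embeds into a
     "value problem" on n*2K letters (is the value of the word in Q?).
     Downward-closed value problems split: guessing the values of two halves
     costs a factor |M x M|, and reduces to problems for principal ideals
     (below m).  Since the syntactic order is given by contexts, x <= m holds
     iff p x q is accepted for every context (p, q) accepting m; so a
     principal-ideal problem on j letters is a conjunction of |M x M|
     language problems on j + 2K letters.  Altogether C^1 for M is at most
     a constant times a constant power of C^1 for L, i.e. N^1(M) = O(N^1(L)). *)

From mathcomp Require Import all_boot zify.
Set Implicit Arguments. Unset Strict Implicit. Unset Printing Implicit Defensive.

Section CoverBounds.
Variables (X Y : finType).
Implicit Types (f g h : X -> Y -> bool) (R : {set rect X Y}).

Lemma one_coverP f R :
  reflect ((forall r x y, r \in R -> x \in r.1 -> y \in r.2 -> f x y) /\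
           (forall x y, f x y -> exists2 r, r \in R & (x \in r.1) && (y \in r.2)))
          (one_cover f R).
Proof.
apply: (iffP andP) => [[/forallP onR /forallP covR]|[onR covR]]; split.
- move=> r x y rR xr yr.
  by move/implyP/(_ rR)/forallP/(_ x)/implyP/(_ xr)/forallP/(_ y)/implyP: (onR r); apply.
- move=> x y fxy; move/forallP/(_ y): (covR x); rewrite fxy => /existsP[r /andP[rR xyr]].
  by exists r.
- apply/forallP=> r; apply/implyP=> rR; apply/forallP=> x; apply/implyP=> xr.
  by apply/forallP=> y; apply/implyP=> yr; apply: onR rR xr yr.
- apply/forallP=> x; apply/forallP=> y; apply/implyP=> /covR[r rR xyr].
  by apply/existsP; exists r; rewrite rR.
Qed.

Lemma bigmin_le (I : eqType) (r : seq I) (P : pred I) (F : I -> nat) x i0 :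
  i0 \in r -> P i0 -> \big[minn/x]_(i <- r | P i) F i <= F i0.
Proof.
elim: r => // j r IH; rewrite inE big_cons => /orP[/eqP<-|i0r] Pi0.
  by rewrite Pi0 geq_minl.
by case: ifP => _; [apply: leq_trans (geq_minr _ _) (IH i0r Pi0) | apply: IH].
Qed.

Lemma C1_le f R : one_cover f R -> C1 f <= #|R|.
Proof. by move=> covR; apply: bigmin_le; rewrite ?mem_index_enum. Qed.

Lemma C1_attained f : exists2 R, one_cover f R & #|R| = C1 f.
Proof.
have all_cover : one_cover f (all_one_rects f).
  apply/one_coverP; split=> [r x y|x y fxy].
    by rewrite inE => /forallP/(_ x)/implyP H /H/forallP/(_ y)/implyP.
  exists ([set x], [set y]); last by rewrite !inE !eqxx.
  rewrite inE; apply/forallP=> x'; apply/implyP; rewrite inE => /eqP->.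
  by apply/forallP=> y'; apply/implyP; rewrite inE => /eqP->.
apply: (big_ind (fun v => exists2 R, one_cover f R & #|R| = v)) => //.
- by exists (all_one_rects f).
- by move=> a b [Ra ? <-] [Rb ? <-]; rewrite /minn; case: ifP => _; [exists Ra | exists Rb].
- by move=> R covR; exists R.
Qed.

Lemma C1_const f b : (forall x y, f x y = b) -> C1 f <= 1.
Proof.
move=> fE; case: b fE => fE.
- apply: leq_trans (C1_le (R := [set (setT, setT)]) _) _; last by rewrite cards1.
  apply/one_coverP; split=> [r x y _ _ _|x y _]; first by rewrite fE.
  by exists (setT, setT); rewrite ?inE.
- apply: leq_trans (C1_le (R := set0) _) _; last by rewrite cards0.
  by apply/one_coverP; split=> [r x y|x y]; rewrite ?inE ?fE.
Qed.

(* Union of 1-covers covers a disjunction. *)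
Lemma C1_or f g h : (forall x y, h x y = f x y || g x y) -> C1 h <= C1 f + C1 g.
Proof.
move=> hE; have [Rf /one_coverP[onf covf] <-] := C1_attained f.
have [Rg /one_coverP[ong covg] <-] := C1_attained g.
apply: leq_trans (C1_le (R := Rf :|: Rg) _) _; last by rewrite -cardsUI leq_addr.
apply/one_coverP; split=> [r x y|x y].
  by rewrite inE hE => /orP[] rR xr yr; [rewrite (onf r) | rewrite (ong r) ?orbT].
by rewrite hE => /orP[/covf|/covg] [r rR xyr]; exists r; rewrite // inE rR ?orbT.
Qed.

(* Pairwise intersections of 1-covers cover a conjunction. *)
Lemma C1_and f g h : (forall x y, h x y = f x y && g x y) -> C1 h <= C1 f * C1 g.
Proof.
move=> hE; have [Rf /one_coverP[onf covf] <-] := C1_attained f.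
have [Rg /one_coverP[ong covg] <-] := C1_attained g.
pose meet (rs : rect X Y * rect X Y) : rect X Y :=
  (rs.1.1 :&: rs.2.1, rs.1.2 :&: rs.2.2).
apply: leq_trans (C1_le (R := meet @: setX Rf Rg) _) _.
  apply/one_coverP; split=> [r x y|x y].
    move=> /imsetP[[r1 r2]]; rewrite inE /= => /andP[r1R r2R] -> /=.
    by rewrite !inE => /andP[x1 x2] /andP[y1 y2]; rewrite hE (onf r1) // (ong r2).
  rewrite hE => /andP[/covf[r1 r1R /andP[x1 y1]] /covg[r2 r2R /andP[x2 y2]]].
  exists (meet (r1, r2)); first by apply/imsetP; exists (r1, r2); rewrite // inE r1R r2R.
  by rewrite /= !inE x1 x2 y1 y2.
by rewrite -cardsX leq_imset_card.
Qed.

Lemma C1_has (J : Type) (s : seq J) (fs : J -> X -> Y -> bool) h :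
  (forall x y, h x y = has (fun j => fs j x y) s) -> C1 h <= \sum_(j <- s) C1 (fs j).
Proof.
elim: s h => [|j s IH] h hE.
  rewrite big_nil; apply: leq_trans (C1_le (R := set0) _) _; last by rewrite cards0.
  by apply/one_coverP; split=> [r x y|x y]; rewrite ?inE ?hE.
rewrite big_cons.
apply: leq_trans (C1_or (f := fs j) (g := fun x y => has (fun j => fs j x y) s) hE) _.
by rewrite leq_add2l IH.
Qed.

Lemma C1_all (J : Type) (s : seq J) (fs : J -> X -> Y -> bool) h :
  (forall x y, h x y = all (fun j => fs j x y) s) -> C1 h <= \prod_(j <- s) C1 (fs j).
Proof.
elim: s h => [|j s IH] h hE; first by rewrite big_nil (C1_const (b := true)).
rewrite big_cons.
apply: leq_trans (C1_and (f := fs j) (g := fun x y => all (fun j => fs j x y) s) hE) _.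
by rewrite leq_mul2l IH ?orbT.
Qed.

End CoverBounds.

(* Rectangle reduction: if g is obtained from f by letting each player
   transform their own input, then preimages of a 1-cover of f cover g. *)
Lemma C1_reduce (X Y X' Y' : finType) (f : X -> Y -> bool) (g : X' -> Y' -> bool)
    (al : X' -> X) (be : Y' -> Y) :
  (forall x y, g x y = f (al x) (be y)) -> C1 g <= C1 f.
Proof.
move=> gE; have [R /one_coverP[onR covR] <-] := C1_attained f.
pose preim (r : rect X Y) : rect X' Y' := (al @^-1: r.1, be @^-1: r.2).
apply: leq_trans (C1_le (R := preim @: R) _) (leq_imset_card _ _).
apply/one_coverP; split=> [r x y /imsetP[r0 r0R ->]|x y].
  by rewrite !inE gE; apply: onR.
by rewrite gE => /covR[r rR xyr]; exists (preim r); rewrite ?imset_f ?inE.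
Qed.

Definition interleave_seq (T : Type) (s t : seq T) : seq T :=
  flatten [seq [:: p.1; p.2] | p <- zip s t].

Lemma interleaveE (T : Type) n (a b : n.-tuple T) :
  interleave a b = interleave_seq a b.
Proof. by []. Qed.

Lemma interleave_cat (T : Type) (s1 s2 t1 t2 : seq T) : size s1 = size t1 ->
  interleave_seq (s1 ++ s2) (t1 ++ t2) = interleave_seq s1 t1 ++ interleave_seq s2 t2.
Proof. by move=> eq_size; rewrite /interleave_seq zip_cat // map_cat flatten_cat. Qed.

Lemma map_interleave (T U : Type) (f : T -> U) (s t : seq T) :
  map f (interleave_seq s t) = interleave_seq (map f s) (map f t).
Proof. by elim: s t => [|x s IH] [|y t] //=; rewrite IH. Qed.

(* A sequence of the right length, viewed as a tuple (padded with x0 otherwise). *)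
Definition tuple_of_seq (T : Type) (N : nat) (x0 : T) (s : seq T) : N.-tuple T :=
  insubd (nseq_tuple N x0) s.

Lemma val_tuple_of_seq (T : Type) N (x0 : T) s :
  size s = N -> tval (tuple_of_seq N x0 s) = s.
Proof. by move=> sizeN; rewrite val_insubd sizeN eqxx. Qed.

Lemma sum_le_const (J : Type) (s : seq J) (F : J -> nat) k :
  (forall j, F j <= k) -> \sum_(j <- s) F j <= size s * k.
Proof.
move=> Fk; elim: s => [|j s IH]; first by rewrite big_nil.
by rewrite big_cons mulSn leq_add.
Qed.

Lemma prod_le_const (J : Type) (s : seq J) (F : J -> nat) k :
  (forall j, F j <= k) -> \prod_(j <- s) F j <= k ^ size s.
Proof.
move=> Fk; elim: s => [|j s IH]; first by rewrite big_nil.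
by rewrite big_cons expnS leq_mul.
Qed.

Lemma leq_expn_base m n e : m <= n -> m ^ e <= n ^ e.
Proof. by move=> le_mn; elim: e => // e IH; rewrite !expnS leq_mul. Qed.

(* A polynomial bound C <= a * u^c turns into a linear bound on the
   protocol costs up_log 2 _ + 2 (u is floored at 1, as log 0 = log 1). *)
Lemma log_linear_bound a c C u : C <= a * (maxn 1 u) ^ c ->
  up_log 2 C + 2 <= (up_log 2 a + c + 1) * (up_log 2 u + 2).
Proof.
move=> Cle; have logC : up_log 2 C <= up_log 2 a + c * up_log 2 u.
  apply: up_log_min => //; apply: leq_trans Cle _.
  rewrite expnD (mulnC c) expnM leq_mul ?up_logP // leq_expn_base //.
  by rewrite geq_max expn_gt0 up_logP.
set la := up_log 2 a in logC *; set lu := up_log 2 u in logC *.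
nia.
Qed.

Section OrderedMonoidFacts.
Variable M : fin_ord_monoid.
Local Notation "x ** y" := (mmul x y) (at level 40, left associativity).

Lemma mle_mul (x1 x2 y1 y2 : M) : mle x1 y1 -> mle x2 y2 -> mle (x1 ** x2) (y1 ** y2).
Proof. by move=> le1 le2; apply: mle_trans (mle_mulr x2 le1) (mle_mull y1 le2). Qed.

Lemma mprod_cat (s t : seq M) : mprod (s ++ t) = mprod s ** mprod t.
Proof. by elim: s => [|x s IH] /=; rewrite ?mmul1 // /mprod /= -/(mprod _) IH mmulA. Qed.

Definition downward (Q : pred M) : Prop := forall x y, Q y -> mle x y -> Q x.
Definition below (m : M) : pred M := fun x => mle x m.

Lemma below_downward m : downward (below m).
Proof. by move=> x y le_ym le_xy; apply: mle_trans le_xy le_ym. Qed.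

Lemma ideal_downward (I : {set M}) : order_ideal I -> downward (fun x => x \in I).
Proof.
move=> /forallP idealI x y yI le_xy.
by move/forallP/(_ y)/implyP: (idealI x); apply; rewrite yI.
Qed.

End OrderedMonoidFacts.

Section SyntacticMonoid.
Variables (S : finType) (L : pred (seq S)) (M : fin_ord_monoid) (eta : seq S -> M).
Hypotheses (eta_nil : eta [::] = mone M)
  (eta_cat : forall x y, eta (x ++ y) = mmul (eta x) (eta y))
  (eta_surj : forall m : M, exists w, eta w = m)
  (eta_le : forall x y, mle (eta x) (eta y) <-> synt_le L x y).

Local Notation "x ** y" := (mmul x y) (at level 40, left associativity).

Lemma exists_word (m : M) : exists w, eta w == m.
Proof. by have [w <-] := eta_surj m; exists w. Qed.

Definition word_of (m : M) : seq S := xchoose (exists_word m).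

Lemma eta_word_of m : eta (word_of m) = m.
Proof. exact/eqP/(xchooseP (exists_word m)). Qed.

(* The image of L in M; L is its preimage, and it is an order ideal
   because <=_L specializes to the empty context. *)
Definition accepting : {set M} := [set m | L (word_of m)].

Lemma L_downward x y : mle (eta x) (eta y) -> L y -> L x.
Proof. by move=> /eta_le le_xy Ly; have := le_xy [::] [::]; rewrite /= !cats0; apply. Qed.

Lemma accepting_eta x : (eta x \in accepting) = L x.
Proof.
by rewrite inE; apply/idP/idP; apply: L_downward; rewrite eta_word_of mle_refl.
Qed.

Lemma accepting_ideal : order_ideal accepting.
Proof.
apply/forallP=> x; apply/forallP=> y; apply/implyP=> /andP[].
by rewrite !inE => Ly le_xy; apply: L_downward Ly; rewrite !eta_word_of.
Qed.

Definition letter (o : option S) : M := if o is Some s then eta [:: s] else mone M.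
Definition eval (w : seq (option S)) : M := mprod (map letter w).

Lemma eval_cat s t : eval (s ++ t) = eval s ** eval t.
Proof. by rewrite /eval map_cat mprod_cat. Qed.

Lemma eval_nones k : eval (nseq k None) = mone M.
Proof. by elim: k => //= k IH; rewrite /eval /= -/(eval _) IH mmul1. Qed.

Lemma eval_some s : eval (map Some s) = eta s.
Proof. by elim: s => [|x s IH] //=; rewrite /eval /= -/(eval _) IH -eta_cat. Qed.

Lemma eval_pmap w : eta (pmap id w) = eval w.
Proof.
elim: w => [|[s|] w IH] //=; rewrite /eval /= -/(eval _) -IH ?mmul1 //.
by rewrite -eta_cat.
Qed.

Lemma L_eval w : L (pmap id w) = (eval w \in accepting).
Proof. by rewrite -accepting_eta eval_pmap. Qed.

Lemma eval_silent_right s : eval (interleave_seq s (nseq (size s) None)) = eval s.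
Proof.
elim: s => [|x s IH] //.
by rewrite /interleave_seq /= -/(interleave_seq _ _) /eval /= -!/(eval _) IH mmul1.
Qed.

Lemma eval_silent_left s : eval (interleave_seq (nseq (size s) None) s) = eval s.
Proof.
elim: s => [|x s IH] //.
by rewrite /interleave_seq /= -/(interleave_seq _ _) /eval /= -!/(eval _) IH mmul1.
Qed.

Definition K : nat := \max_(m : M) size (word_of m).
Definition pad (m : M) : seq (option S) :=
  map Some (word_of m) ++ nseq (K - size (word_of m)) None.

Lemma size_pad m : size (pad m) = K.
Proof. by rewrite size_cat size_map size_nseq subnKC // (leq_bigmax m). Qed.

Lemma eval_pad m : eval (pad m) = m.
Proof. by rewrite eval_cat eval_some eval_nones mmulr1 eta_word_of. Qed.

Lemma eval_pad_silent_right m : eval (interleave_seq (pad m) (nseq K None)) = m.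
Proof. by rewrite -{1}(size_pad m) eval_silent_right eval_pad. Qed.

Lemma eval_pad_silent_left m : eval (interleave_seq (nseq K None) (pad m)) = m.
Proof. by rewrite -{1}(size_pad m) eval_silent_left eval_pad. Qed.

Definition lang_problem n (a b : n.-tuple (option S)) : bool :=
  L (pmap id (interleave a b)).
Definition value_problem (Q : pred M) n (a b : n.-tuple (option S)) : bool :=
  Q (eval (interleave a b)).
Arguments lang_problem n : clear implicits.
Arguments value_problem Q n : clear implicits.

Definition Psi n : nat := \max_(m : M) C1 (value_problem (below m) n).
Definition ncontexts : nat := #|{: M * M}|.

Lemma C1_below_Psi m n : C1 (value_problem (below m) n) <= Psi n.
Proof. exact: (leq_bigmax m). Qed.

(* The lower bound: the language problem is the value problem of the
   order ideal [accepting] composed with [letter] on both sides. *)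
Lemma lower_bound n : N1L L n <= N1MI accepting n.
Proof.
rewrite /N1L /N1MI /N1 leq_add2r; apply: leq_up_log.
apply: (C1_reduce (al := map_tuple letter) (be := map_tuple letter)) => a b.
by rewrite /= !interleaveE L_eval -map_interleave.
Qed.

(* Splitting a downward-closed value problem in two halves: guess the values
   (m1, m2) of both halves with m1 m2 in Q, then check each half is below its
   guess.  Downward closure makes "below" sufficient. *)
Lemma split_bound Q n1 n2 : downward Q ->
  C1 (value_problem Q (n1 + n2)) <= ncontexts * (Psi n1 * Psi n2).
Proof.
move=> downQ; pose T := (n1 + n2).-tuple (option S).
pose left (a : T) : n1.-tuple (option S) := tuple_of_seq n1 None (take n1 a).
pose right (a : T) : n2.-tuple (option S) := tuple_of_seq n2 None (drop n1 a).
have leftE a : tval (left a) = take n1 a.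
  by rewrite val_tuple_of_seq // size_takel // size_tuple leq_addr.
have rightE a : tval (right a) = drop n1 a.
  by rewrite val_tuple_of_seq // size_drop size_tuple addKn.
have evalE a b : eval (interleave a b) =
    eval (interleave (left a) (left b)) ** eval (interleave (right a) (right b)).
  rewrite !interleaveE !leftE !rightE -eval_cat -interleave_cat ?cat_take_drop //.
  by rewrite !size_takel // size_tuple leq_addr.
pose halves (pr : M * M) (a b : T) :=
  value_problem (below pr.1) n1 (left a) (left b) &&
  value_problem (below pr.2) n2 (right a) (right b).
pose guesses := [seq pr <- enum {: M * M} | Q (pr.1 ** pr.2)].
apply: leq_trans (C1_has (s := guesses) (fs := halves) _) _.
  move=> a b; rewrite /value_problem evalE; apply/idP/hasP => [Qab|[[m1 m2]]].
    exists (eval (interleave (left a) (left b)), eval (interleave (right a) (right b))).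
      by rewrite mem_filter mem_enum andbT.
    by rewrite /halves /value_problem /below !mle_refl.
  rewrite mem_filter /= => /andP[Qm _] /andP[le1 le2].
  exact: downQ Qm (mle_mul le1 le2).
apply: leq_trans
  (@sum_le_const _ guesses (fun pr => C1 (halves pr)) (Psi n1 * Psi n2) _) _.
  move=> pr; apply: leq_trans (C1_and (h := halves pr) (fun a b => erefl)) _.
  apply: leq_mul; apply: leq_trans (C1_below_Psi _ _).
  - exact: (C1_reduce (al := left) (be := left)).
  - exact: (C1_reduce (al := right) (be := right)).
by rewrite leq_mul2r size_filter /ncontexts cardE count_size orbT.
Qed.

Lemma below_contexts m x : mle x m =
  all (fun pq : M * M => pq.1 ** (x ** pq.2) \in accepting)
      [seq pq <- enum {: M * M} | pq.1 ** (m ** pq.2) \in accepting].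
Proof.
have ctxE u w v : eta (u ++ w ++ v) = eta u ** (eta w ** eta v) by rewrite !eta_cat.
apply/idP/allP => [le_xm [p q]|ctx].
  rewrite mem_filter /= => /andP[pmq _].
  rewrite -(eta_word_of p) -(eta_word_of x) -(eta_word_of q) -ctxE accepting_eta.
  have /eta_le : mle (eta (word_of x)) (eta (word_of m)) by rewrite !eta_word_of.
  by apply; rewrite -accepting_eta ctxE !eta_word_of.
have /eta_le : synt_le L (word_of x) (word_of m); last by rewrite !eta_word_of.
move=> u v Lm; rewrite -accepting_eta ctxE eta_word_of; apply: (ctx (eta u, eta v)).
by rewrite mem_filter mem_enum andbT /= -(eta_word_of m) -ctxE accepting_eta.
Qed.

(* Principal-ideal problems reduce to a bounded number of instances of the
   language problem: one per context (p, q), with Alice writing p and q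
   around her input while Bob stays silent there. *)
Lemma context_bound n : Psi n <= maxn 1 (C1 (lang_problem (K + n + K))) ^ ncontexts.
Proof.
apply/bigmax_leqP => m _.
pose contexts := [seq pq <- enum {: M * M} | pq.1 ** (m ** pq.2) \in accepting].
pose in_context (pq : M * M) (a b : n.-tuple (option S)) :=
  pq.1 ** (eval (interleave a b) ** pq.2) \in accepting.
apply: leq_trans (C1_all (s := contexts) (fs := in_context) _) _.
  by move=> a b; rewrite /value_problem /below below_contexts.
apply: leq_trans (@prod_le_const _ contexts (fun pq => C1 (in_context pq))
  (maxn 1 (C1 (lang_problem (K + n + K)))) _) _; last first.
  by apply: leq_pexp2l; rewrite ?leq_max // size_filter /ncontexts cardE count_size.
move=> [p q]; apply: leq_trans (leq_maxr 1 _).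
pose al (a : n.-tuple (option S)) := tuple_of_seq (K + n + K) None (pad p ++ a ++ pad q).
pose be (b : n.-tuple (option S)) :=
  tuple_of_seq (K + n + K) None (nseq K None ++ b ++ nseq K None).
have size_al (a : n.-tuple (option S)) : size (pad p ++ a ++ pad q) = K + n + K.
  by rewrite size_cat size_pad size_cat size_pad size_tuple addnA.
have size_be (b : n.-tuple (option S)) :
    size (nseq K None ++ b ++ nseq K None) = K + n + K.
  by rewrite !size_cat size_nseq size_tuple addnA.
apply: (C1_reduce (al := al) (be := be)) => a b.
rewrite /lang_problem /in_context /= !interleaveE !val_tuple_of_seq ?size_al ?size_be //.
rewrite L_eval !interleave_cat ?size_pad ?size_nseq ?size_tuple // !eval_cat.
by rewrite !eval_pad_silent_right.
Qed.

Lemma block_bound t n Q : downward Q ->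
  C1 (value_problem Q (t * n)) <= (ncontexts * maxn 1 (Psi n)) ^ t.
Proof.
elim: t Q => [|t IH] Q downQ.
  rewrite mul0n expn0; apply: (C1_const (b := Q (mone M))) => a b.
  by rewrite /value_problem interleaveE !(size0nil (size_tuple _)).
rewrite mulSn; apply: leq_trans (split_bound _ _ downQ) _.
have Psi_tn : Psi (t * n) <= (ncontexts * maxn 1 (Psi n)) ^ t.
  by apply/bigmax_leqP => m _; apply/IH/below_downward.
by rewrite expnS mulnA leq_mul // leq_mul // leq_maxr.
Qed.

(* Embedding the monoid problem into a value problem: each player replaces
   every element of M by a K-letter block written on their own turns, while
   the partner stays silent during it. *)
Definition alice_blocks (s : seq M) : seq (option S) :=
  flatten [seq pad m ++ nseq K None | m <- s].
Definition bob_blocks (s : seq M) : seq (option S) :=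
  flatten [seq nseq K None ++ pad m | m <- s].

Lemma size_alice_blocks s : size (alice_blocks s) = size s * (K + K).
Proof.
elim: s => //= m s IH.
by rewrite size_cat -/(alice_blocks s) IH (size_cat (pad m)) size_pad size_nseq mulSn.
Qed.

Lemma size_bob_blocks s : size (bob_blocks s) = size s * (K + K).
Proof.
elim: s => //= m s IH.
by rewrite size_cat -/(bob_blocks s) IH (size_cat (nseq K None)) size_pad size_nseq mulSn.
Qed.

Lemma eval_blocks s t : size s = size t ->
  eval (interleave_seq (alice_blocks s) (bob_blocks t)) = mprod (interleave_seq s t).
Proof.
elim: s t => [|x s IH] [|y t] //= [] eq_size.
rewrite -/(alice_blocks s) -/(bob_blocks t) interleave_cat; last first.
  by rewrite (size_cat (pad x)) (size_cat (nseq K None)) !size_pad size_nseq.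
rewrite interleave_cat ?size_pad ?size_nseq // !eval_cat IH //.
rewrite eval_pad_silent_right eval_pad_silent_left.
by rewrite /interleave_seq /= -/(interleave_seq _ _) /mprod /= -/(mprod _) mmulA.
Qed.

Lemma embedding_bound (Q : pred M) n :
  C1 (fun a b : n.-tuple M => Q (mprod (interleave a b)))
    <= C1 (value_problem Q (n * (K + K))).
Proof.
pose al (a : n.-tuple M) := tuple_of_seq (n * (K + K)) None (alice_blocks a).
pose be (b : n.-tuple M) := tuple_of_seq (n * (K + K)) None (bob_blocks b).
apply: (C1_reduce (al := al) (be := be)) => a b.
rewrite /value_problem /= !interleaveE !val_tuple_of_seq;
  rewrite ?size_alice_blocks ?size_bob_blocks ?size_tuple //.
by rewrite eval_blocks // !size_tuple.
Qed.

(* Psi grows polynomially in C^1 of the language problem of the same length: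
   split off 2K letters, then use the context bound on the rest. *)
Lemma Psi_bound j : maxn 1 (Psi (j + (K + K))) <=
  maxn 1 (ncontexts * Psi (K + K)) * maxn 1 (C1 (lang_problem (j + (K + K)))) ^ ncontexts.
Proof.
have split_Psi : Psi (j + (K + K)) <= ncontexts * (Psi j * Psi (K + K)).
  by apply/bigmax_leqP => m _; apply/split_bound/below_downward.
have ctx_Psi : Psi j <= maxn 1 (C1 (lang_problem (j + (K + K)))) ^ ncontexts.
  by rewrite addnCA addnA; apply: context_bound.
rewrite geq_max muln_gt0 expn_gt0 !leq_max /=.
apply: leq_trans split_Psi _; rewrite mulnCA mulnC.
exact: leq_mul (leq_maxr _ _) ctx_Psi.
Qed.

Lemma N1M_upper : exists c N0, forall n, N0 <= n -> N1M M n <= c * N1L L n.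
Proof.
pose A := maxn 1 (ncontexts * Psi (K + K)).
exists (up_log 2 ((ncontexts * A) ^ (K + K)) + ncontexts * (K + K) + 1), (K + K).
move=> n le_n; apply/bigmax_leqP => I idealI.
have [j ->] : exists j, n = j + (K + K) by exists (n - (K + K)); rewrite subnK.
rewrite /N1MI /N1L /N1; apply: log_linear_bound.
apply: leq_trans (embedding_bound _ _) _; rewrite mulnC.
apply: leq_trans (block_bound _ _ (ideal_downward idealI)) _.
rewrite expnM -expnMn -mulnA; apply: leq_expn_base.
by rewrite leq_mul2l; apply/orP; right; apply: Psi_bound.
Qed.

Lemma N1L_le_N1M n : N1L L n <= N1M M n.
Proof. exact: leq_trans (lower_bound n) (leq_bigmax_cond _ accepting_ideal). Qed.

End SyntacticMonoid.

Theorem theorem4p1 (S : finType) (L : pred (seq S)) (M : fin_ord_monoid)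
    (eta : seq S -> M) :
  regular L -> syntactic_ordered_monoid L eta ->
  BigTheta (N1M M) (N1L L).
Proof.
move=> _ [eta_nil eta_cat eta_surj eta_le].
have [c [N0 upper]] := N1M_upper eta_nil eta_cat eta_surj eta_le.
exists c.+1; split=> //; exists N0 => n le_n; split.
- by apply: leq_trans (upper n le_n) _; rewrite leq_mul2r leqnSn orbT.
- exact: leq_trans (N1L_le_N1M eta_nil eta_cat eta_surj eta_le n) (leq_pmull _ _).
Qed.
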